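(* Let $b\ge3$, $2\le j\le b-1$ and $0<\epsilon<\frac1b$. Then $\widehat M_1$ is attained, up to applying a common permutation to the coordinates of $p$ and $q$ and up to interchanging $p$ and $q$, at a pair of the form $p=(\epsilon^{(l_1)},\alpha^{(l_2)},\beta^{(b-l_1-l_2)})$, $q=(\delta^{(l_1)},\epsilon^{(l_2)},\eta^{(b-l_1-l_2)})$, with nonnegative integers $l_1,l_2$, $\alpha,\beta,\delta,\eta\ge\epsilon$ and $l_1\epsilon+l_2\alpha+(b-l_1-l_2)\beta=1=l_1\delta+l_2\epsilon+(b-l_1-l_2)\eta$.
   Context: For an integer $1\le j\le b-1$ and vectors $p,q\in\mathbb R^b$, $$\Psi_j(p;q)=\frac{1}{(b-j-1)!}\sum_{\sigma\in S_b}\Big(p_{\sigma(1)}\cdots p_{\sigma(j)}\,q_{\sigma(j+1)}+q_{\sigma(1)}\cdots q_{\sigma(j)}\,p_{\sigma(j+1)}\Big),$$ where $S_b$ is the set of permutations of $\{1,\dots,b\}$. $x^{(m)}$ denotes $m$ consecutive coordinates equal to $x$. Let $\mathcal P_b$ be the set of probability vectors in $\mathbb R^b$, $\widehat{\mathcal P}_b^0=\{p\in\mathcal P_b:p_i\ge\epsilon\ \forall i\}$ and $\widehat M_1=\sup_{p,q\in\widehat{\mathcal P}_b^0}\Psi_j(p;q)$. *)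

From HB Require Import structures.
From mathcomp Require Import all_boot all_order all_algebra all_fingroup.
From mathcomp Require Import all_classical all_reals.
Set Implicit Arguments. Unset Strict Implicit. Unset Printing Implicit Defensive.
Import Order.TTheory GRing.Theory Num.Theory.
Local Open Scope ring_scope.
Local Open Scope classical_set_scope.

(* Coordinates are 0-based: index i : 'I_b stands for coordinate i+1. *)

(* In 0-based indexing, s(1..j) are s i for i < j and s(j+1) is s i for i = j
   (the product over the singleton {i | i = j}). *)
Definition Psi (R : realType) (b j : nat) (p q : 'I_b -> R) : R :=
  ((b - j - 1)`!%:R)^-1 *
  \sum_(s : 'S_b)
     ( (\prod_(i < b | (i < j)%N) p (s i)) * (\prod_(i < b | val i == j) q (s i))
     + (\prod_(i < b | (i < j)%N) q (s i)) * (\prod_(i < b | val i == j) p (s i))).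

Definition Pb (R : realType) (b : nat) : set ('I_b -> R) :=
  [set p | (forall i, 0 <= p i) /\ \sum_(i < b) p i = 1].

Definition Phat0 (R : realType) (b : nat) (eps : R) : set ('I_b -> R) :=
  [set p | Pb p /\ forall i, eps <= p i].

Definition Mhat1 (R : realType) (b j : nat) (eps : R) : R :=
  sup [set x | exists p q : 'I_b -> R, Phat0 eps p /\ Phat0 eps q /\ x = Psi j p q].

Definition blockvec (R : realType) (b l1 l2 : nat) (x y z : R) : 'I_b -> R :=
  fun i => if (i < l1)%N then x else if (i < l1 + l2)%N then y else z.
Arguments blockvec {R} b l1 l2 x y z i.

From HB Require Import structures.
From mathcomp Require Import all_boot all_order all_algebra all_fingroup.
From mathcomp Require Import all_classical all_reals all_analysis.
From mathcomp.algebra_tactics Require Import ring lra.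
From mathcomp Require Import zify.
Import Order.TTheory GRing.Theory Num.Theory.
Import numFieldTopology.Exports numFieldNormedType.Exports.
Local Open Scope ring_scope.

(* A "transfer" moves mass between coordinates i and k of p and q at speed t.
   Each monomial of Psi then changes in only two factors, and when p, q are
   symmetric in (i, k) reversing t is the transposition of i and k; hence
   Psi is exactly t |-> Psi(p, q) + t^2 C along such a line, with C < 0 when
   only q moves (j >= 2).  A maximizer exists by compactness, and at a
   maximizer: two floor coordinates of p carry equal values of q (else
   averaging them strictly increases Psi), and symmetrically; two interior
   coordinates with different values lie on a line where C = 0, along which
   one moves to a new maximizer with fewer interior coordinates.  Iterating
   gives a maximizer constant on its interior; sorting the coordinates into
   "p = eps", "q = eps" and "interior" yields the block form. *)

Lemma prod_two_affine (I : finType) (R : comNzRingType) (a c : I) (f g : I -> R)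
    (t : R) : a != c -> (forall m, m != a -> m != c -> g m = 0) ->
  \prod_m (f m + t * g m) + \prod_m (f m + (- t) * g m) =
  2 * \prod_m f m + 2 * t ^+ 2 *
     (g a * g c * \prod_(m | (m != a) && (m != c)) f m).
Proof.
move=> ac g0.
rewrite (bigD1 a) //= [in X in _ + X](bigD1 a) //= [in X in _ = X](bigD1 a) //=.
rewrite (bigD1 c) 1?eq_sym //= [in X in _ + X](bigD1 c) 1?eq_sym //=.
rewrite [in X in _ = X](bigD1 c) 1?eq_sym //=.
have rest u : \prod_(m | (m != a) && (m != c)) (f m + u * g m) =
              \prod_(m | (m != a) && (m != c)) f m.
  by apply: eq_bigr => m /andP[ma mc]; rewrite g0 // mulr0 addr0.
by rewrite !rest; ring.
Qed.

Lemma perm_two_points (T : finType) (a c i k : T) : a != c -> i != k ->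
  exists s : {perm T}, s a = i /\ s c = k.
Proof.
move=> ac ik; pose c' := tperm a i c.
have c'i : c' != i by rewrite /c' -{2}(tpermL a i) (inj_eq perm_inj) eq_sym.
exists (tperm a i * tperm c' k)%g; rewrite !permM tpermL tpermD //.
  by rewrite -/c' tpermL.
by rewrite eq_sym.
Qed.

Lemma sum_two_changed (I : finType) (V : nmodType) (i k : I) (z w : I -> V) :
  i != k -> (forall l, l != i -> l != k -> w l = z l) -> w i + w k = z i + z k ->
  \sum_l w l = \sum_l z l.
Proof.
move=> ik zw wik.
rewrite (bigD1 i) //= [RHS](bigD1 i) //= (bigD1 k) 1?eq_sym //= [in RHS](bigD1 k) 1?eq_sym //=.
rewrite addrA wik -addrA; congr (_ + (_ + _)).
by apply: eq_bigr => l /andP[li lk]; apply: zw.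
Qed.

Lemma ray_exit (R : realFieldType) (a1 a2 d1 d2 : R) :
  `|d1| < a1 -> `|d2| < a2 -> (d1 != 0) || (d2 != 0) ->
  exists2 T, 1 < T & [/\ `|T * d1| <= a1, `|T * d2| <= a2 &
                         `|T * d1| = a1 \/ `|T * d2| = a2].
Proof.
wlog first_exit : a1 a2 d1 d2 / (d1 != 0) && (a1 / `|d1| * `|d2| <= a2).
  move=> hw d1a d2a nz.
  have [|] := boolP ((d1 != 0) && (a1 / `|d1| * `|d2| <= a2)) => [h|].
    exact: hw _ _ _ _ h d1a d2a nz.
  rewrite negb_and negbK -ltNge => not_first.
  have a1_ge0 : 0 <= a1 := le_trans (normr_ge0 _) (ltW d1a).
  have a2_ge0 : 0 <= a2 := le_trans (normr_ge0 _) (ltW d2a).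
  have swapped : (d2 != 0) && (a2 / `|d2| * `|d1| <= a1).
    have [d10|d10] := eqVneq d1 0.
      by rewrite d10 normr0 mulr0 a1_ge0 andbT; move: nz; rewrite d10 eqxx.
    move: not_first; rewrite (negbTE d10) /= => lt21.
    have n1 : 0 < `|d1| by rewrite normr_gt0.
    have d20 : d2 != 0.
      by apply: contraTneq lt21 => ->; rewrite normr0 mulr0 -leNgt.
    have n2 : 0 < `|d2| by rewrite normr_gt0.
    rewrite d20 /= mulrAC ler_pdivrMr // ltW //.
    by rewrite -ltr_pdivlMr // mulrAC.
  have nz' : (d2 != 0) || (d1 != 0) by rewrite orbC.
  have [T T1 [l2 l1 e]] := hw a2 a1 d2 d1 swapped d2a d1a nz'.
  by exists T => //; split => //; case: e; [right|left].
case/andP: first_exit => d10 le2 d1a _.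
have n1 : 0 < `|d1| by rewrite normr_gt0.
have a10 : 0 < a1 by apply: le_lt_trans d1a.
exists (a1 / `|d1|); first by rewrite ltr_pdivlMr // mul1r.
have T_norm : `|a1 / `|d1| | = a1 / `|d1| by rewrite ger0_norm // divr_ge0 // ltW.
rewrite !(normrM (a1 / `|d1|)) T_norm divfK ?gt_eqF //.
by split => //; left.
Qed.

Lemma norm_step_floor (R : realDomainType) (m u e : R) :
  `|u| = m - e -> m + u = e \/ m - u = e.
Proof.
have [u0|u0] := ler0P u => h; [left|right]; lra.
Qed.

Section Transfer.
Context {R : realType} {b : nat} (j : nat).
Implicit Types (x y : 'I_b -> R) (s : 'S_b).

Lemma Psi_swap x y : Psi j x y = Psi j y x.
Proof. by rewrite /Psi; congr (_ * _); apply: eq_bigr => s _; rewrite addrC. Qed.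

Lemma Psi_perm (t : 'S_b) x y :
  Psi j (fun l => x (t l)) (fun l => y (t l)) = Psi j x y.
Proof.
rewrite /Psi; congr (_ * _).
rewrite [RHS](reindex_inj (mulIg t)) /=; apply: eq_bigr => s _.
by congr (_ * _ + _ * _); apply: eq_bigr => i _; rewrite permM.
Qed.

(* The m-th factor of the monomial of Psi attached to s: x at the first j
   positions, y at position j and the neutral value c elsewhere (c = 1 for
   the monomial itself, c = 0 for its increment along a transfer). *)
Definition factorPsi (c : R) s x y (m : 'I_b) : R :=
  if (m < j)%N then x (s m) else if val m == j then y (s m) else c.

Definition monomial s x y :=
  (\prod_(i < b | (i < j)%N) x (s i)) * (\prod_(i < b | val i == j) y (s i)).

Lemma monomialE s x y : monomial s x y = \prod_m factorPsi 1 s x y m.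
Proof.
rewrite /monomial (big_mkcond (fun m : 'I_b => (m < j)%N)).
rewrite (big_mkcond (fun m : 'I_b => val m == j)) -big_split /=.
apply: eq_bigr => m _; rewrite /factorPsi.
case: ifP => mj; case: eqP => // mj'; rewrite ?mulr1 ?mul1r //.
by rewrite mj' ltnn in mj.
Qed.

Definition constPsi : R := ((b - j - 1)`!%:R)^-1.

Lemma constPsi_gt0 : 0 < constPsi.
Proof. by rewrite /constPsi invr_gt0 ltr0n fact_gt0. Qed.

Lemma PsiE x y :
  Psi j x y = constPsi * \sum_s (monomial s x y + monomial s y x).
Proof. by []. Qed.

Definition transfer (i k : 'I_b) (d : R) (l : 'I_b) : R :=
  if l == i then d else if l == k then - d else 0.

Definition shift x (i k : 'I_b) (d t : R) : 'I_b -> R :=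
  fun l => x l + t * transfer i k d l.

Lemma transfer0 (i k l : 'I_b) : transfer i k (0 : R) l = 0.
Proof. by rewrite /transfer oppr0; do 2?case: ifP. Qed.

Lemma shift_i x (i k : 'I_b) (d t : R) : shift x i k d t i = x i + t * d.
Proof. by rewrite /shift /transfer eqxx. Qed.

Lemma shift_k x (i k : 'I_b) (d t : R) : i != k -> shift x i k d t k = x k - t * d.
Proof. by move=> ik; rewrite /shift /transfer eq_sym (negbTE ik) eqxx mulrN. Qed.

Lemma shift_other x (i k l : 'I_b) (d t : R) :
  l != i -> l != k -> shift x i k d t l = x l.
Proof. by move=> li lk; rewrite /shift /transfer (negbTE li) (negbTE lk) mulr0 addr0. Qed.

Lemma shift_zero x (i k : 'I_b) (t : R) : shift x i k 0 t = x.
Proof. by apply: funext => l; rewrite /shift transfer0 mulr0 addr0. Qed.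

Lemma shift_sum x (i k : 'I_b) (d t : R) : i != k ->
  \sum_l shift x i k d t l = \sum_l x l.
Proof.
move=> ik; apply: (@sum_two_changed _ _ i k) => // [l li lk|]; first exact: shift_other.
by rewrite shift_i shift_k //; ring.
Qed.

Definition mid x (i k : 'I_b) : 'I_b -> R := shift x i k ((x k - x i) / 2) 1.

Lemma mid_i x (i k : 'I_b) : mid x i k i = (x i + x k) / 2.
Proof. by rewrite /mid shift_i; field. Qed.

Lemma mid_sym x (i k : 'I_b) : i != k -> mid x i k i = mid x i k k.
Proof. by move=> ik; rewrite /mid shift_i shift_k //; field. Qed.

Lemma shift_mid x (i k : 'I_b) : i != k -> x = shift (mid x i k) i k ((x i - x k) / 2) 1.
Proof.
move=> ik; apply: funext => l; rewrite /mid.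
have [->|li] := eqVneq l i; first by rewrite !shift_i; field.
have [->|lk] := eqVneq l k; first by rewrite !shift_k //; field.
by rewrite !shift_other.
Qed.

Lemma factorPsi_shift s x y (i k : 'I_b) (dx dy t : R) m :
  factorPsi 1 s (shift x i k dx t) (shift y i k dy t) m =
  factorPsi 1 s x y m + t * factorPsi 0 s (transfer i k dx) (transfer i k dy) m.
Proof. by rewrite /factorPsi /shift; do 2?case: ifP => _; rewrite ?mulr0 ?addr0. Qed.

Definition rest (i k : 'I_b) s x y :=
  \prod_(m | (m != (s^-1)%g i) && (m != (s^-1)%g k)) factorPsi 1 s x y m.

(* The coefficient of t^2 in the monomial s along a transfer between i, k
   with increments u, v of x, y. *)
Definition cross (i k : 'I_b) s x y u v :=
  factorPsi 0 s u v ((s^-1)%g i) * factorPsi 0 s u v ((s^-1)%g k) * rest i k s x y.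

Lemma monomial_even s x y (i k : 'I_b) (dx dy t : R) : i != k ->
  monomial s (shift x i k dx t) (shift y i k dy t) +
  monomial s (shift x i k dx (- t)) (shift y i k dy (- t)) =
  2 * monomial s x y + 2 * t ^+ 2 * cross i k s x y (transfer i k dx) (transfer i k dy).
Proof.
move=> ik; rewrite !monomialE.
under eq_bigr do rewrite factorPsi_shift.
under [X in _ + X]eq_bigr do rewrite factorPsi_shift.
apply: prod_two_affine; first by rewrite (inj_eq perm_inj).
move=> m mi mk; rewrite /factorPsi /transfer.
have -> : (s m == i) = false by apply/negbTE; apply: contra mi => /eqP <-; rewrite permK.
have -> : (s m == k) = false by apply/negbTE; apply: contra mk => /eqP <-; rewrite permK.
by do 2?case: ifP.
Qed.

Definition curv (i k : 'I_b) x y (dx dy : R) := constPsi *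
  \sum_s (cross i k s x y (transfer i k dx) (transfer i k dy) +
          cross i k s y x (transfer i k dy) (transfer i k dx)).

Lemma Psi_even x y (i k : 'I_b) (dx dy t : R) : i != k ->
  Psi j (shift x i k dx t) (shift y i k dy t) +
  Psi j (shift x i k dx (- t)) (shift y i k dy (- t)) =
  2 * Psi j x y + 2 * t ^+ 2 * curv i k x y dx dy.
Proof.
move=> ik; rewrite !PsiE /curv -mulrDr -big_split /=.
rewrite (eq_bigr (fun s => 2 * (monomial s x y + monomial s y x) + 2 * t ^+ 2 *
   (cross i k s x y (transfer i k dx) (transfer i k dy) +
    cross i k s y x (transfer i k dy) (transfer i k dx)))); last first.
  move=> s _; rewrite addrACA !monomial_even //; ring.
by rewrite big_split /= -!mulr_sumr; ring.
Qed.

(* When x and y are symmetric in (i, k), reversing time is the transposition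
   of i and k, so Psi is exactly quadratic along the transfer. *)
Lemma shift_opp x (i k : 'I_b) (d t : R) : i != k -> x i = x k ->
  shift x i k d (- t) = (fun l => shift x i k d t (tperm i k l)).
Proof.
move=> ik xik; have ki : k != i by rewrite eq_sym.
apply: funext => l; rewrite /shift /transfer.
case: tpermP => [->|->|/eqP li /eqP lk].
- by rewrite eqxx (negbTE ki) eqxx xik; ring.
- by rewrite eqxx (negbTE ki) eqxx -xik; ring.
- by rewrite (negbTE li) (negbTE lk) !mulr0.
Qed.

Lemma Psi_transfer x y (i k : 'I_b) (dx dy t : R) :
  i != k -> x i = x k -> y i = y k ->
  Psi j (shift x i k dx t) (shift y i k dy t) = Psi j x y + t ^+ 2 * curv i k x y dx dy.
Proof.
move=> ik xik yik; have := Psi_even x y i k dx dy t ik.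
by rewrite (shift_opp x i k dx t ik xik) (shift_opp y i k dy t ik yik) Psi_perm => H; lra.
Qed.

End Transfer.

Section Concavity.
Context {R : realType} {b : nat} (j : nat).
Implicit Types (x y : 'I_b -> R) (s : 'S_b).

Lemma rest_gt0 (i k : 'I_b) s x y : (forall l, 0 < x l) -> (forall l, 0 < y l) ->
  0 < rest j i k s x y.
Proof. by move=> xp yp; apply: prodr_gt0 => m _; rewrite /factorPsi; do 2?case: ifP. Qed.

Lemma perm_inv_val_neq s (i k : 'I_b) : i != k -> val ((s^-1)%g i) != val ((s^-1)%g k).
Proof. by move=> ik; rewrite val_eqE (inj_eq perm_inj). Qed.

(* When only the second vector moves, its increment sits at position j only,
   which cannot hold both i and k: no curvature contribution. *)
Lemma cross_second_moving s x y (i k : 'I_b) (d : R) : i != k ->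
  cross j i k s x y (transfer i k 0) (transfer i k d) = 0.
Proof.
move=> /(perm_inv_val_neq s); rewrite /cross /factorPsi !transfer0.
set a := (s^-1)%g i; set c := (s^-1)%g k => ac.
have [_|_] := ltnP a j; first by rewrite !mul0r.
have [_|_] := ltnP c j; first by rewrite mulr0 mul0r.
have [aj|_] := eqVneq (val a) j; last by rewrite !mul0r.
have [cj|_] := eqVneq (val c) j; last by rewrite mulr0 mul0r.
by rewrite aj cj eqxx in ac.
Qed.

(* When only the first vector moves, the increments +d and -d meet when both
   i and k are among the first j positions of the monomial. *)
Lemma cross_first_moving s x y (i k : 'I_b) (d : R) : i != k ->
  cross j i k s x y (transfer i k d) (transfer i k 0) =
  if ((s^-1)%g i < j)%N && ((s^-1)%g k < j)%N then - d ^+ 2 * rest j i k s x y else 0.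
Proof.
move=> ik; have ki : k != i by rewrite eq_sym.
rewrite /cross /factorPsi !permKV !transfer0 /transfer eqxx (negbTE ki) eqxx.
set a := (s^-1)%g i; set c := (s^-1)%g k.
have [_|_] := ltnP a j; last by case: eqVneq; rewrite !mul0r.
by have [_|_] := ltnP c j; [rewrite expr2; ring | case: eqVneq; rewrite mulr0 mul0r].
Qed.

Hypothesis j2 : (2 <= j)%N.

(* Strict concavity of Psi along a transfer moving only the second vector:
   the permutation placing i, k at positions 0, 1 contributes -d^2 rest < 0. *)
Lemma curv_second_lt0 x y (i k : 'I_b) (d : R) :
  i != k -> (forall l, 0 < x l) -> (forall l, 0 < y l) -> d != 0 ->
  curv j i k x y 0 d < 0.
Proof.
move=> ik xp yp d0.
have b1 : (1 < b)%N.
  by move: (ltn_ord i) (ltn_ord k) (ik); rewrite -val_eqE /=; lia.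
have [s0 [s0i s0k]] : exists s0 : 'S_b,
    s0 (Ordinal (ltnW b1)) = i /\ s0 (Ordinal b1) = k by apply: perm_two_points.
have term_le0 s : cross j i k s x y (transfer i k 0) (transfer i k d) +
    cross j i k s y x (transfer i k d) (transfer i k 0) <= 0.
  rewrite cross_second_moving // cross_first_moving // add0r.
  case: ifP => // _; rewrite mulNr oppr_le0.
  by apply: mulr_ge0; [exact: sqr_ge0 | exact/ltW/rest_gt0].
have term_lt0 : cross j i k s0 x y (transfer i k 0) (transfer i k d) +
    cross j i k s0 y x (transfer i k d) (transfer i k 0) < 0.
  rewrite cross_second_moving // cross_first_moving // add0r.
  have -> : (s0^-1)%g i = Ordinal (ltnW b1) by rewrite -s0i permK.
  have -> : (s0^-1)%g k = Ordinal b1 by rewrite -s0k permK.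
  rewrite /= j2 (ltnW j2) /= mulNr oppr_lt0.
  by apply: mulr_gt0; [rewrite exprn_even_gt0 | exact: rest_gt0].
rewrite /curv pmulr_rlt0 ?constPsi_gt0 // (bigD1 s0) //=.
set others := \sum_(s | s != s0) _.
have : others <= 0 by apply: sumr_le0 => s _; exact: term_le0.
by move: term_lt0; lra.
Qed.

End Concavity.

Section Maximizers.
Context {R : realType} {b : nat} (j : nat) (eps : R).
Implicit Types (x y p q : 'I_b -> R).

Definition maximizer p q := Phat0 eps p /\ Phat0 eps q /\
  forall p' q', Phat0 eps p' -> Phat0 eps q' -> Psi j p' q' <= Psi j p q.

Lemma maximizer_swap p q : maximizer p q -> maximizer q p.
Proof.
move=> [pf [qf pmax]]; split=> //; split=> // p' q' p'f q'f.
by rewrite Psi_swap [Psi j q p]Psi_swap; apply: pmax.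
Qed.

Hypothesis eps_gt0 : 0 < eps.

Lemma Phat0P x : Phat0 eps x <-> (forall l, eps <= x l) /\ \sum_l x l = 1.
Proof.
split; first by case=> [[_ xs] xe].
by case=> xe xs; split => //; split => // l; apply: le_trans (ltW eps_gt0) (xe l).
Qed.

Lemma Phat0_gt0 x l : Phat0 eps x -> 0 < x l.
Proof. by case/Phat0P => xe _; apply: lt_le_trans (xe l). Qed.

Lemma mid_Phat0 x (i k : 'I_b) : i != k -> Phat0 eps x -> Phat0 eps (mid x i k).
Proof.
move=> ik /Phat0P[xe xs]; apply/Phat0P; split; last by rewrite shift_sum.
move=> l; have [->|li] := eqVneq l i.
  by rewrite mid_i; have := xe i; have := xe k; lra.
have [->|lk] := eqVneq l k.
  by rewrite -mid_sym // mid_i; have := xe i; have := xe k; lra.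
by rewrite /mid shift_other.
Qed.

Lemma shift_Phat0 x (i k : 'I_b) (d t : R) : i != k -> x i = x k ->
  Phat0 eps x -> `|t * d| <= x i - eps -> Phat0 eps (shift x i k d t).
Proof.
move=> ik xik /Phat0P[xe xs]; rewrite ler_norml => /andP[lo hi].
apply/Phat0P; split; last by rewrite shift_sum.
move=> l; have [->|li] := eqVneq l i; first by rewrite shift_i; lra.
have [->|lk] := eqVneq l k; first by rewrite shift_k // -xik; lra.
by rewrite shift_other.
Qed.

(* Along a symmetric transfer line through a maximizer (time 1), Psi is
   t |-> Psi(x, y) + t^2 C; feasibility at times 0 and T > 1 forces C = 0, so
   the point at time T is a maximizer as well. *)
Lemma maximizer_along_line x y (i k : 'I_b) (dx dy T : R) :
  i != k -> x i = x k -> y i = y k -> 1 < T ->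
  Phat0 eps x -> Phat0 eps y ->
  Phat0 eps (shift x i k dx T) -> Phat0 eps (shift y i k dy T) ->
  maximizer (shift x i k dx 1) (shift y i k dy 1) ->
  maximizer (shift x i k dx T) (shift y i k dy T).
Proof.
move=> ik xik yik T1 xf yf xTf yTf [_ [_ pmax]].
have line t := Psi_transfer j x y i k dx dy t ik xik yik.
set C := curv j i k x y dx dy in line.
have C0 : C = 0.
  have T2 : 1 < T ^+ 2 by rewrite expr2; nra.
  have := pmax x y xf yf; have := pmax _ _ xTf yTf; rewrite !line expr1n.
  by nra.
split=> //; split=> // p' q' p'f q'f.
by have := pmax _ _ p'f q'f; rewrite !line C0 !mulr0.
Qed.

Lemma maximizer_interior_step {p q} {i k : 'I_b} : maximizer p q ->
  eps < p i -> eps < q i -> eps < p k -> eps < q k ->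
  (p i != p k) || (q i != q k) ->
  exists p' q', [/\ maximizer p' q',
    (forall l, l != i -> l != k -> p' l = p l /\ q' l = q l) &
    [\/ p' i = eps, q' i = eps, p' k = eps | q' k = eps]].
Proof.
move=> pqmax pi qi pk qk neq; have [pf [qf _]] := pqmax.
have [eik|ik] := eqVneq i k; first by move: neq; rewrite eik !eqxx.
set x := mid p i k; set y := mid q i k.
set dx := (p i - p k) / 2; set dy := (q i - q k) / 2.
have xi : x i = (p i + p k) / 2 := mid_i p i k.
have yi : y i = (q i + q k) / 2 := mid_i q i k.
have [T T1 [Tx Ty hit]] : exists2 T, 1 < T &
    [/\ `|T * dx| <= x i - eps, `|T * dy| <= y i - eps &
        `|T * dx| = x i - eps \/ `|T * dy| = y i - eps].
  apply: ray_exit.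
  - by rewrite xi ltr_norml /dx; apply/andP; split; lra.
  - by rewrite yi ltr_norml /dy; apply/andP; split; lra.
  - move: neq; apply: contraLR; rewrite !negb_or !negbK /dx /dy.
    by rewrite !mulf_eq0 !invr_eq0 !pnatr_eq0 !orbF !subr_eq0; apply.
have xsym : x i = x k := mid_sym p i k ik.
have ysym : y i = y k := mid_sym q i k ik.
have xf := mid_Phat0 p i k ik pf; have yf := mid_Phat0 q i k ik qf.
have Tmax : maximizer (shift x i k dx T) (shift y i k dy T).
  apply: maximizer_along_line => //; try exact: shift_Phat0.
  by rewrite -!shift_mid.
exists (shift x i k dx T), (shift y i k dy T); split => //.
  by move=> l li lk; rewrite !shift_other // /x /y /mid !shift_other.
rewrite !shift_i !shift_k // -xsym -ysym.
by case: hit => /norm_step_floor[] h;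
  [constructor 1 | constructor 3 | constructor 2 | constructor 4].
Qed.

Definition interior p q := [set l : 'I_b | (eps < p l) && (eps < q l)].

(* Repeating the interior step strictly shrinks the interior, so some
   maximizer has p and q constant on its interior coordinates. *)
Lemma maximizer_interior_constant p q : maximizer p q ->
  exists p' q', maximizer p' q' /\ forall i k,
    i \in interior p' q' -> k \in interior p' q' -> p' i = p' k /\ q' i = q' k.
Proof.
move: {2}#|interior p q|.+1 (ltnSn #|interior p q|) => n.
elim: n p q => // n IH p q small pqmax.
have [const|] := boolP [forall i, forall k,
  [&& i \in interior p q & k \in interior p q] ==> (p i == p k) && (q i == q k)].
  exists p, q; split => // i k ii ki.
  by move/forallP/(_ i)/forallP/(_ k): const; rewrite ii ki => /andP[/eqP-> /eqP->].
rewrite negb_forall => /existsP[i]; rewrite negb_forall => /existsP[k].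
rewrite negb_imply negb_and => /andP[/andP[ii ki] neq].
move: (ii) (ki); rewrite !inE => /andP[pi qi] /andP[pk qk].
have [p' [q' [pqmax' same hit]]] := maximizer_interior_step pqmax pi qi pk qk neq.
apply: (IH p' q') => //.
have /proper_card shrink : interior p' q' \proper interior p q.
  apply/properP; split.
    apply/fintype.subsetP => l; rewrite !inE.
    have [->|li] := eqVneq l i; first by rewrite pi qi.
    have [->|lk] := eqVneq l k; first by rewrite pk qk.
    by have [-> ->] := same l li lk.
  by case: hit => h; [exists i|exists i|exists k|exists k];
    rewrite // !inE h ltxx ?andbF.
exact: leq_trans shrink small.
Qed.

Hypothesis j_ge2 : (2 <= j)%N.

(* At a maximizer, coordinates where p sits at the floor eps carry equal
   values of q: otherwise averaging them strictly increases Psi. *)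
Lemma maximizer_floor_first {p q} {i k : 'I_b} : maximizer p q ->
  p i = eps -> p k = eps -> q i = q k.
Proof.
move=> pqmax pie pke; have [pf [qf pmax]] := pqmax.
have [-> //|ik] := eqVneq i k.
have [// | qik] := eqVneq (q i) (q k); exfalso.
have qmf := mid_Phat0 q i k ik qf.
have curv_lt0 : curv j i k p (mid q i k) 0 ((q i - q k) / 2) < 0.
  apply: curv_second_lt0 => // [l|l|]; try exact: Phat0_gt0.
  by rewrite mulf_eq0 negb_or subr_eq0 qik invr_eq0 pnatr_eq0.
have := Psi_transfer j p (mid q i k) i k 0 ((q i - q k) / 2) 1 ik
  (etrans pie (esym pke)) (mid_sym q i k ik).
rewrite shift_zero -shift_mid // expr1n mul1r => ray.
by have := pmax p _ pf qmf; lra.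
Qed.

Lemma maximizer_floor_second {p q} {i k : 'I_b} : maximizer p q ->
  q i = eps -> q k = eps -> p i = p k.
Proof. by move=> /maximizer_swap; apply: maximizer_floor_first. Qed.

End Maximizers.

Lemma continuous_add (R : realType) (T : topologicalType) (f g : T -> R) :
  continuous f -> continuous g -> continuous (fun x => f x + g x).
Proof. by move=> cf cg x; apply: cvgD; [exact: cf | exact: cg]. Qed.

Lemma continuous_mul (R : realType) (T : topologicalType) (f g : T -> R) :
  continuous f -> continuous g -> continuous (fun x => f x * g x).
Proof. by move=> cf cg x; apply: cvgM; [exact: cf | exact: cg]. Qed.

Section Existence.
Context {R : realType} {b : nat} (j : nat) (eps : R).
Local Open Scope classical_set_scope.
Implicit Types (p q : 'I_b -> R) (v : 'rV[R]_(b + b)).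

Definition first_half v : 'I_b -> R := fun i => v ord0 (lshift b i).
Definition second_half v : 'I_b -> R := fun i => v ord0 (rshift b i).
Definition pair_rV p q : 'rV[R]_(b + b) := row_mx (\row_i p i) (\row_i q i).

Lemma first_half_pair p q : first_half (pair_rV p q) = p.
Proof. by apply: funext => i; rewrite /first_half /pair_rV row_mxEl mxE. Qed.

Lemma second_half_pair p q : second_half (pair_rV p q) = q.
Proof. by apply: funext => i; rewrite /second_half /pair_rV row_mxEr mxE. Qed.

(* Psi is a polynomial in the coordinates of the pair. *)
Lemma Psi_continuous :
  continuous (fun v => Psi j (first_half v) (second_half v)).
Proof.
have prod_cont := continuous_big (x0 := (1 : R)) (@mul_continuous R).
apply: continuous_mul; first exact: cst_continuous.
apply: (continuous_big (x0 := 0) (@add_continuous R)) => s _.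
by apply: continuous_add; apply: continuous_mul; apply: prod_cont => i _;
  exact: coord_continuous.
Qed.

Definition feasible_pairs :=
  [set v | Phat0 eps (first_half v) /\ Phat0 eps (second_half v)].

Hypothesis eps_gt0 : 0 < eps.

Lemma sum_coord_continuous (h : 'I_b -> 'I_(b + b)) :
  continuous (fun v => \sum_i v ord0 (h i)).
Proof.
by apply: (continuous_big (x0 := 0) (@add_continuous R)) => i _; exact: coord_continuous.
Qed.

Lemma feasible_pairs_closed : closed feasible_pairs.
Proof.
have -> : feasible_pairs =
    \bigcap_(l : 'I_(b + b)) [set v : 'rV[R]_(b + b) | eps <= v ord0 l] `&`
    [set v | \sum_i first_half v i = 1] `&` [set v | \sum_i second_half v i = 1].
  apply/seteqP; split => v /=.
    case=> /(Phat0P _ eps_gt0)[pe ps] /(Phat0P _ eps_gt0)[qe qs]; split; [split|] => // l _.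
    by rewrite -(splitK l); case: (fintype.split l) => i /=; [exact: pe|exact: qe].
  by case=> [[ge ps qs]]; split; apply/(Phat0P _ eps_gt0); split => // i; exact: ge.
apply: closedI; [apply: closedI|].
- apply: closed_bigI => l _.
  have := (continuous_closedP _).1 (@coord_continuous R 1 (b + b) ord0 l) _ (@closed_ge R eps).
  exact.
- have := (continuous_closedP _).1 (sum_coord_continuous (lshift b)) _ (@closed_eq R 1).
  exact.
- have := (continuous_closedP _).1 (sum_coord_continuous (@rshift b b)) _ (@closed_eq R 1).
  exact.
Qed.

Lemma Phat0_le1 (x : 'I_b -> R) l : Phat0 eps x -> x l <= 1.
Proof.
case=> [[x0 xs] _]; rewrite -xs (bigD1 l) //= lerDl.
by apply: sumr_ge0 => i _.
Qed.

(* The feasible pairs lie in the cube [0, 1]^(b + b). *)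
Lemma feasible_pairs_compact : compact feasible_pairs.
Proof.
apply: (subclosed_compact feasible_pairs_closed
  (rV_compact (fun _ => @segment_compact R 0 1))).
move=> v [pf qf] l /=; rewrite -(splitK l) in_itv /=.
case: (fintype.split l) => i /=; apply/andP; split.
- exact: ltW (Phat0_gt0 _ eps_gt0 _ i pf).
- exact: Phat0_le1 i pf.
- exact: ltW (Phat0_gt0 _ eps_gt0 _ i qf).
- exact: Phat0_le1 i qf.
Qed.

Lemma uniform_Phat0 : eps < (b%:R)^-1 -> Phat0 eps (fun _ : 'I_b => (b%:R)^-1).
Proof.
move=> eb; apply/(Phat0P _ eps_gt0); split => [_|]; first exact: ltW.
have b0 : b%:R != 0 :> R.
  by apply: contraTneq eb => ->; rewrite invr0 -leNgt ltW.
by rewrite sumr_const card_ord -[_ *+ b]mulr_natr mulVf.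
Qed.

(* Psi is continuous on the compact nonempty feasible set, hence attains its
   maximum there. *)
Lemma exists_maximizer : eps < (b%:R)^-1 -> exists p q, maximizer j eps p q.
Proof.
move=> eb; have unif := uniform_Phat0 eb.
have nonempty : feasible_pairs !=set0.
  by exists (pair_rV (fun _ => (b%:R)^-1) (fun _ => (b%:R)^-1));
    rewrite /feasible_pairs /= first_half_pair second_half_pair.
have [v /set_mem[pf qf] vmax] := compact_EVT_max nonempty feasible_pairs_compact
  (continuous_subspaceT Psi_continuous).
exists (first_half v), (second_half v); split=> //; split=> // p q pf' qf'.
have := vmax (pair_rV p q); rewrite /= first_half_pair second_half_pair; apply.
by rewrite inE /feasible_pairs /= first_half_pair second_half_pair.
Qed.

End Existence.

Lemma perm_three_blocks (n : nat) (P Q : pred 'I_n) :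
  exists (s : 'S_n) (l1 l2 : nat), (l1 + l2 <= n)%N /\ forall i : 'I_n,
    if (i < l1)%N then P (s i)
    else if (i < l1 + l2)%N then ~~ P (s i) && Q (s i)
    else ~~ P (s i) && ~~ Q (s i).
Proof.
pose r := [seq l <- enum 'I_n | predC P l].
pose s1 := [seq l <- enum 'I_n | P l].
pose s2 := [seq l <- r | Q l].
pose s3 := [seq l <- r | predC Q l].
have split_rest : perm_eq (s2 ++ s3) r by rewrite perm_filterC.
have split_all : perm_eq (s1 ++ r) (enum 'I_n) by rewrite perm_filterC.
have sorted_perm : perm_eq (s1 ++ s2 ++ s3) (ord_tuple n).
  by rewrite val_ord_tuple (perm_trans _ split_all) // perm_cat2l.
have [s Hs] := tuple_permP sorted_perm.
have nth_s (i : 'I_n) : nth i (s1 ++ s2 ++ s3) i = s i.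
  by rewrite Hs -tnth_nth tnth_mktuple tnth_ord_tuple.
have size_all : size (s1 ++ s2 ++ s3) = n by rewrite (perm_size sorted_perm) size_tuple.
exists s, (size s1), (size s2); split.
  by move: size_all; rewrite !size_cat; lia.
move=> i; rewrite -nth_s nth_cat.
have [i1|i1] := ltnP i (size s1).
  by have := mem_nth i i1; rewrite mem_filter => /andP[].
rewrite nth_cat -ltn_subLR //.
have [i2|i2] := ltnP (i - size s1) (size s2).
  by have := mem_nth i i2; rewrite !mem_filter => /and4P[qx px _ _]; apply/andP.
have i3 : (i - size s1 - size s2 < size s3)%N.
  by move: size_all (ltn_ord i) i1 i2; rewrite !size_cat; lia.
by have := mem_nth i i3; rewrite !mem_filter => /and4P[nqx px _ _]; apply/andP.
Qed.

Lemma constant_on (T : finType) (R : numDomainType) (P : pred T) (f : T -> R) (lo : R) :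
  (forall l, lo <= f l) -> (forall l l', P l -> P l' -> f l = f l') ->
  exists c, lo <= c /\ forall l, P l -> f l = c.
Proof.
move=> flo fconst; case: (pickP P) => [l0 Pl0|noP].
  by exists (f l0); split => // l Pl; apply: fconst.
by exists lo; split => // l; rewrite noP.
Qed.

Lemma sum_blockvec (R : realType) (b l1 l2 : nat) (x y z : R) : (l1 + l2 <= b)%N ->
  \sum_(i < b) blockvec b l1 l2 x y z i = l1%:R * x + l2%:R * y + (b - l1 - l2)%:R * z.
Proof.
move=> hb; pose F n := if (n < l1)%N then x else if (n < l1 + l2)%N then y else z.
have l1b : (l1 <= b)%N := leq_trans (leq_addr l2 l1) hb.
rewrite -(big_mkord xpredT F) (big_cat_nat _ (n := l1)) //=.
rewrite [X in _ + X](big_cat_nat _ (n := l1 + l2)) ?leq_addr //=.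
rewrite (eq_big_nat _ _ (F2 := fun _ => x)) => [|n /andP[_ nl1]]; last first.
  by rewrite /F nl1.
rewrite [X in _ + (X + _)](eq_big_nat _ _ (F2 := fun _ => y)) => [|n /andP[l1n nl2]]; last first.
  by rewrite /F ltnNge l1n nl2.
rewrite [X in _ + (_ + X)](eq_big_nat _ _ (F2 := fun _ => z)) => [|n /andP[l2n _]]; last first.
  by rewrite /F ltnNge (leq_trans (leq_addr _ _) l2n) ltnNge l2n.
by rewrite !sumr_const_nat !mulr_natl subn0 addKn subnDA addrA.
Qed.

Lemma sum_perm_blockvec {R : realType} {b l1 l2 : nat} {s : 'S_b} {x : 'I_b -> R}
    {u v w : R} : (l1 + l2 <= b)%N ->
  (forall i, x (s i) = blockvec b l1 l2 u v w i) ->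
  \sum_i x i = l1%:R * u + l2%:R * v + (b - l1 - l2)%:R * w.
Proof.
move=> hb xs; rewrite -sum_blockvec // (reindex_inj (@perm_inj _ s)).
by apply: eq_bigr => i _; rewrite xs.
Qed.

Section BlockForm.
Context {R : realType} {b : nat} (j : nat) (eps : R).
Hypotheses (eps_gt0 : 0 < eps) (j_ge2 : (2 <= j)%N).

Lemma maximizer_block_form (p q : 'I_b -> R) : maximizer j eps p q ->
  (forall i k, i \in interior eps p q -> k \in interior eps p q ->
     p i = p k /\ q i = q k) ->
  exists (s : 'S_b) (l1 l2 : nat) (alpha beta delta eta : R),
    [/\ (l1 + l2 <= b)%N, eps <= alpha, eps <= beta, eps <= delta & eps <= eta] /\
    forall i, p (s i) = blockvec b l1 l2 eps alpha beta i /\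
              q (s i) = blockvec b l1 l2 delta eps eta i.
Proof.
move=> pqmax const; have [pf [qf _]] := pqmax.
have /(Phat0P _ eps_gt0)[pe _] := pf; have /(Phat0P _ eps_gt0)[qe _] := qf.
have in_interior l : p l != eps -> q l != eps -> l \in interior eps p q.
  by move=> pl ql; rewrite inE !lt_neqAle ![eps == _]eq_sym pl ql pe qe.
have [s [l1 [l2 [hl blocks]]]] :=
  perm_three_blocks _ (fun l => p l == eps) (fun l => q l == eps).
have [delta [de floor_p]] : exists c, eps <= c /\ forall l, p l == eps -> q l = c.
  apply: constant_on => // l l' /eqP pl /eqP pl'.
  exact: (maximizer_floor_first j eps eps_gt0 j_ge2 pqmax pl pl').
have [alpha [ae floor_q]] :
    exists c, eps <= c /\ forall l, (p l != eps) && (q l == eps) -> p l = c.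
  apply: constant_on => // l l' /andP[_ /eqP ql] /andP[_ /eqP ql'].
  exact: (maximizer_floor_second j eps eps_gt0 j_ge2 pqmax ql ql').
have [beta [be inner_p]] :
    exists c, eps <= c /\ forall l, (p l != eps) && (q l != eps) -> p l = c.
  apply: constant_on => // l l' /andP[pl ql] /andP[pl' ql'].
  by have [] := const l l' (in_interior l pl ql) (in_interior l' pl' ql').
have [eta [ee inner_q]] :
    exists c, eps <= c /\ forall l, (p l != eps) && (q l != eps) -> q l = c.
  apply: constant_on => // l l' /andP[pl ql] /andP[pl' ql'].
  by have [] := const l l' (in_interior l pl ql) (in_interior l' pl' ql').
exists s, l1, l2, alpha, beta, delta, eta; split => // i.
move: (blocks i); rewrite /blockvec; case: ifP => _.
  by move=> ps; split; [exact/eqP | exact: floor_p].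
case: ifP => _ => [/andP[ps qs]|ps].
  by split; [apply: floor_q; rewrite ps | exact/eqP].
by split; [exact: inner_p | exact: inner_q].
Qed.

End BlockForm.

Lemma Mhat1_maximizer {R : realType} {b j : nat} {eps : R} {p q : 'I_b -> R} :
  maximizer j eps p q -> Mhat1 b j eps = Psi j p q.
Proof.
move=> [pf [qf pmax]].
set S := [set x : R | exists p q : 'I_b -> R,
  Phat0 eps p /\ Phat0 eps q /\ x = Psi j p q]%classic.
have inS : S (Psi j p q) by exists p, q.
have ub : ubound S (Psi j p q) by move=> x [p' [q' [p'f [q'f ->]]]]; apply: pmax.
apply/eqP; rewrite eq_le; apply/andP; split.
  by apply: ge_sup => //; exists (Psi j p q).
by apply: sup_upper_bound => //; split; exists (Psi j p q).
Qed.

Theorem mainTheorem14 (R : realType) (b j : nat) (eps : R) :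
  (3 <= b)%N -> (2 <= j)%N -> (j <= b - 1)%N ->
  0 < eps -> eps < (b%:R)^-1 ->
  exists (p q : 'I_b -> R),
    Phat0 eps p /\ Phat0 eps q /\ Psi j p q = Mhat1 b j eps /\
    exists (s : 'S_b) (l1 l2 : nat) (alpha beta delta eta : R),
      [/\ (l1 + l2 <= b)%N,
          eps <= alpha, eps <= beta, eps <= delta & eps <= eta] /\
      l1%:R * eps + l2%:R * alpha + (b - l1 - l2)%:R * beta = 1 /\
      l1%:R * delta + l2%:R * eps + (b - l1 - l2)%:R * eta = 1 /\
      ( (forall i, p (s i) = blockvec b l1 l2 eps alpha beta i /\
                   q (s i) = blockvec b l1 l2 delta eps eta i)
      \/ (forall i, q (s i) = blockvec b l1 l2 eps alpha beta i /\
                    p (s i) = blockvec b l1 l2 delta eps eta i)).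
Proof.
move=> _ j_ge2 _ eps_gt0 eps_small.
have [p0 [q0 max0]] := exists_maximizer j _ eps_gt0 eps_small.
have [p [q [pqmax const]]] := maximizer_interior_constant j _ eps_gt0 _ _ max0.
have [pf [qf _]] := pqmax.
have [s [l1 [l2 [alpha [beta [delta [eta [bounds blocks]]]]]]]] :=
  maximizer_block_form j _ eps_gt0 j_ge2 _ _ pqmax const.
have [hl _ _ _ _] := bounds.
exists p, q; do 2!split => //; split; first by rewrite (Mhat1_maximizer pqmax).
exists s, l1, l2, alpha, beta, delta, eta; split => //; split; last split; last by left.
- by rewrite -(sum_perm_blockvec hl (fun i => (blocks i).1)); case: pf => [[_ ->]].
- by rewrite -(sum_perm_blockvec hl (fun i => (blocks i).2)); case: qf => [[_ ->]].
Qed.
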